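(* Let $p$ be a prime, $m,t\ge 1$, $B=\mathrm{GF}(p^m)$ and $F=\mathrm{GF}(p^{mt})$, and assume that $t$ is divisible by $p$ (the characteristic of $F$). Let $n=|F|=|B|^t$, $k=n(1-1/|B|)$, and let $\mathcal{C}=\mathrm{RS}(F,k)=\{(f(\alpha))_{\alpha\in F} : f\in F[x],\ \deg f<k\}$, where the symbol $f(\alpha)$ is stored at the node indexed by $\alpha$. Then for any two distinct $\alpha^*,\overline{\alpha}\in F$, a repair center can recover both erased symbols $f(\alpha^* )$ and $f(\overline{\alpha})$ by downloading a total of $2(n-2)$ sub-symbols (elements of $B$), namely two sub-symbols from each surviving node $\alpha\in F\setminus\{\alpha^*,\overline{\alpha}\}$, each computed from the symbol $f(\alpha)$ stored at that node.
   Context: Elements of $F$ are called symbols and elements of $B$ sub-symbols. The trace is $\mathrm{Tr}_{F/B}(x)=\sum_{i=0}^{t-1}x^{|B|^i}$. In centralized repair, a single repair center downloads data from the surviving nodes and computes all erased symbols; the repair bandwidth is the total number of sub-symbols it downloads. *)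

From HB Require Import structures.
From mathcomp Require Import all_boot all_order all_algebra all_field.
Set Implicit Arguments. Unset Strict Implicit. Unset Printing Implicit Defensive.
Import GRing.Theory.
Local Open Scope ring_scope.

(* Reed-Solomon code RS(F,k): evaluation of polynomials of degree < k
   (i.e. size <= k) at all points of F; node alpha stores f.[alpha]. *)
Definition RS_poly (F : finFieldType) (k : nat) (f : {poly F}) : bool :=
  (size f <= k)%N.

Definition rs_dim (F B : finFieldType) : nat :=
  (#|F| - #|F| %/ #|B|)%N.

(* Data received by the repair center: two sub-symbols (in B) from each
   surviving node alpha, computed by h alpha from the stored symbol f(alpha);
   nothing (0) from the erased nodes. *)
Definition downloaded (F B : finFieldType) (a1 a2 : F)
  (h : F -> F -> 'I_2 -> B) (f : {poly F}) : F -> 'I_2 -> B :=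
  fun a i => if (a != a1) && (a != a2) then h a f.[a] i else 0.

From mathcomp Require Import all_boot all_order all_fingroup all_algebra all_solvable all_field zify.
From Stdlib Require Import ClassicalEpsilon.
Set Implicit Arguments. Unset Strict Implicit. Unset Printing Implicit Defensive.
Import GRing.Theory.
Local Open Scope ring_scope.

(* Write q = #|B| and Tr for the trace of F over B. For u in F the polynomial
   P_u = Tr(u (X - a)) / (X - a) has degree q^(t-1) - 1, so when deg f < q^t - q^(t-1)
   the values of P_u f sum to zero over F; taking traces gives
     Tr(u f(a)) = - \sum_(x <> a) Tr(u (x - a)) Tr(f(x) / (x - a)).
   Hence node x only needs to send Tr(f(x) / (x - a1)) and Tr(f(x) / (x - a2)), which lie
   in B. For a = a1 the one unknown term is the one at x = a2; it is recovered from the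
   same identity at a = a2 with u = 1 / (a1 - a2), where the term at a1 carries the factor
   Tr(1) = t = 0 because p divides t. Since the trace form is nondegenerate, knowing
   Tr(u f(a1)) for all u determines f(a1). *)

Lemma natr_card_finField (F : finFieldType) : #|F|%:R = 0 :> F.
Proof. by rewrite -cardsT -FinRing.zmodXgE expg_cardG ?inE. Qed.

Lemma finField_poly_eq0 (F : finFieldType) (P : {poly F}) :
  (size P <= #|F|)%N -> (forall x, P.[x] = 0) -> P = 0.
Proof.
move=> size_P P_eq0; apply/eqP; apply: contraTT size_P => P_neq0.
rewrite -ltnNge cardE (max_poly_roots P_neq0) ?enum_uniq //.
by apply/allP => x _; apply/rootP.
Qed.

Lemma sum_expr_finField (F : finFieldType) j :
  (j < #|F|.-1)%N -> \sum_(x : F) x ^+ j = 0.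
Proof.
case: j => [_ | j lt_j]; first by rewrite (eq_bigr (fun=> 1)) ?sumr_const ?natr_card_finField.
have [c c_neq0 cj_neq1] : exists2 c : F, c != 0 & c ^+ j.+1 != 1.
  apply/exists_inP; apply: contraLR lt_j => /exists_inPn cj_eq1; rewrite -leqNgt.
  have XnB1_neq0 : 'X^(j.+1) - 1 != 0 :> {poly F}.
    by rewrite -size_poly_eq0 -polyC1 size_XnsubC.
  have := max_poly_roots XnB1_neq0 _ (enum_uniq [pred x : F | x != 0]).
  rewrite -polyC1 size_XnsubC // -cardE cardC1; apply.
  apply/allP => x; rewrite mem_enum => x_neq0.
  by rewrite rootE !hornerE; move/negPn: (cj_eq1 x x_neq0) => /eqP ->; rewrite subrr.
(* multiplication by [c] permutes [F] and scales the sum by [c ^+ j.+1] *)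
have : \sum_(x : F) x ^+ j.+1 = c ^+ j.+1 * \sum_(x : F) x ^+ j.+1.
  rewrite mulr_sumr (reindex_inj (mulfI c_neq0)) /=.
  by apply: eq_bigr => x _; rewrite exprMn.
move/eqP; rewrite -subr_eq0 -{1}[\sum_x _]mul1r -mulrBl mulf_eq0 subr_eq0 eq_sym.
by rewrite (negbTE cj_neq1) => /eqP.
Qed.

Lemma sum_horner_finField (F : finFieldType) (Q : {poly F}) :
  (size Q < #|F|)%N -> \sum_(x : F) Q.[x] = 0.
Proof.
move=> size_Q; under eq_bigr do rewrite horner_coef.
rewrite exchange_big big1 // => i _ /=.
rewrite -mulr_sumr sum_expr_finField ?mulr0 //.
by rewrite -ltnS prednK ?(leq_ltn_trans (ltn_ord i)) // (leq_ltn_trans _ size_Q).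
Qed.

Section Trace.

Variables (F : finFieldType) (q t : nat).
Hypotheses (q_gt1 : (1 < q)%N) (q_pchar : [pchar F].-nat q) (cardF : #|F| = (q ^ t)%N).

Definition trace (x : F) : F := \sum_(i < t) x ^+ (q ^ i).

Let q_gt0 : (0 < q)%N. Proof. exact: ltnW. Qed.

Let t_gt0 : (0 < t)%N.
Proof. by rewrite lt0n; apply: contraTneq (finNzRing_gt1 F) => t0; rewrite cardF t0. Qed.

Let expq_le (i : 'I_t) : (q ^ i <= q ^ t.-1)%N.
Proof. by rewrite leq_pexp2l // -ltnS prednK. Qed.

Lemma traceD x y : trace (x + y) = trace x + trace y.
Proof.
rewrite /trace -big_split; apply: eq_bigr => i _.
by rewrite exprDn_pchar // pnatX q_pchar.
Qed.

Lemma trace0 : trace 0 = 0.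
Proof. by rewrite /trace big1 // => i _; rewrite expr0n expn_eq0 eqn0Ngt q_gt0. Qed.

Lemma traceN x : trace (- x) = - trace x.
Proof. by apply/eqP; rewrite -addr_eq0 -traceD addNr trace0. Qed.

Lemma traceB x y : trace (x - y) = trace x - trace y.
Proof. by rewrite traceD traceN. Qed.

Lemma trace_sum (I : finType) (P : pred I) (G : I -> F) :
  trace (\sum_(i | P i) G i) = \sum_(i | P i) trace (G i).
Proof. by apply: big_morph; [exact: traceD | exact: trace0]. Qed.

Lemma traceZ a x : a ^+ q = a -> trace (a * x) = a * trace x.
Proof.
move=> aq; rewrite /trace mulr_sumr; apply: eq_bigr => i _.
by rewrite exprMn; congr (_ * _); elim: (nat_of_ord i) => // n IHn; rewrite expnSr exprM IHn.
Qed.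

Lemma trace1 : trace 1 = t%:R.
Proof. by rewrite /trace (eq_bigr (fun=> 1)) ?sumr_const ?card_ord // => i _; rewrite expr1n. Qed.

Lemma trace_expq x : trace x ^+ q = trace x.
Proof.
have expq0 : (0 : F) ^+ q = 0 by rewrite expr0n gtn_eqF.
rewrite /trace (big_morph (fun y : F => y ^+ q) (fun y z => exprDn_pchar y z q_pchar) expq0).
under eq_bigr do rewrite -exprM -expnSr.
(* the Frobenius power shifts the summands cyclically, as [x ^+ (q ^ t) = x] *)
rewrite -(prednK t_gt0) big_ord_recr big_ord_recl /= prednK // -cardF expf_card addrC.
by congr (_ + _); apply: eq_bigr => i _; rewrite lift0.
Qed.

Lemma trace_nondegenerate x : (forall u, trace (u * x) = 0) -> x = 0.
Proof.
move=> trace_ux; apply/eqP; apply: contraT => x_neq0.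
pose T : {poly F} := \sum_(i < t) 'X^(q ^ i).
have T_eq0 : T = 0.
  apply: finField_poly_eq0 => [|y].
    apply: leq_trans (size_sum _ _ _) _; apply/bigmax_leqP => i _.
    by rewrite size_polyXn cardF (leq_ltn_trans (expq_le i)) // ltn_exp2l // prednK.
  rewrite horner_sum (eq_bigr (fun i : 'I_t => y ^+ (q ^ i))) => [|i _]; last exact: hornerXn.
  by have := trace_ux (y / x); rewrite divfK.
have := congr1 (fun P : {poly F} => P`_1) T_eq0.
rewrite coef0 coef_sum (bigD1 (Ordinal t_gt0)) //= big1 => [|i i_neq0]; rewrite coefXn.
  by rewrite expn0 eqxx addr0 => /eqP; rewrite oner_eq0.
by move: i_neq0; rewrite -val_eqE -[1%N](expn0 q) eqn_exp2l // eq_sym => /negbTE ->.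
Qed.

(* The polynomial [trace (u * (X - a)) / (X - a)]. *)
Definition trace_quot (a u : F) : {poly F} :=
  \sum_(i < t) u ^+ (q ^ i) *: ('X - a%:P) ^+ (q ^ i).-1.

Lemma mul_trace_quot a u x : (x - a) * (trace_quot a u).[x] = trace (u * (x - a)).
Proof.
rewrite /trace_quot horner_sum mulr_sumr; apply: eq_bigr => i _.
rewrite hornerZ horner_exp hornerXsubC mulrCA -exprS prednK ?expn_gt0 ?q_gt0 //.
by rewrite exprMn.
Qed.

Lemma trace_quot_at a u : (trace_quot a u).[a] = u.
Proof.
rewrite /trace_quot horner_sum (bigD1 (Ordinal t_gt0)) //= big1 => [|i i_neq0].
  by rewrite hornerZ expn0 expr1 expr0 hornerC mulr1 addr0.
have expq_gt1 : (1 < q ^ i)%N.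
  by rewrite -[X in (X < _)%N](expn0 q) ltn_exp2l // lt0n -val_eqE eq_sym in i_neq0 *.
by rewrite hornerZ horner_exp hornerXsubC subrr expr0n -subn1 subn_eq0 leqNgt expq_gt1 mulr0.
Qed.

Lemma size_trace_quot a u : (size (trace_quot a u) <= q ^ t.-1)%N.
Proof.
apply: leq_trans (size_sum _ _ _) _; apply/bigmax_leqP => i _.
apply: leq_trans (size_scale_leq _ _) _.
by rewrite size_exp_XsubC prednK ?expn_gt0 ?q_gt0.
Qed.

Lemma trace_check_relation a u (g : {poly F}) :
  (size g <= #|F| - q ^ t.-1)%N ->
  trace (u * g.[a]) +
    \sum_(x | x != a) trace (u * (x - a)) * trace (g.[x] / (x - a)) = 0.
Proof.
move=> size_g.
have sum_eq0 : \sum_(x : F) (trace_quot a u * g).[x] = 0.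
  apply: sum_horner_finField; apply: leq_ltn_trans (size_polyMleq _ _) _.
  have := size_trace_quot a u; have : (q ^ t.-1 <= #|F|)%N.
    by rewrite cardF leq_pexp2l // leq_pred.
  lia.
have := congr1 trace sum_eq0; rewrite trace_sum trace0 (bigD1 a) //= hornerM trace_quot_at.
move=> trace_sum_eq0; rewrite -[RHS]trace_sum_eq0; congr (_ + _).
apply: eq_bigr => x x_neq_a.
have xBa_neq0 : x - a != 0 by rewrite subr_eq0.
have quot_x : (trace_quot a u).[x] = trace (u * (x - a)) / (x - a).
  by rewrite -mul_trace_quot mulrC mulKf.
by rewrite hornerM quot_x mulrAC -mulrA (traceZ _ (trace_expq _)).
Qed.

Lemma trace_check_two_points a b u (g : {poly F}) :
  a != b -> (size g <= #|F| - q ^ t.-1)%N ->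
  (forall x, x != a -> x != b -> trace (g.[x] / (x - a)) = 0) ->
  trace (u * g.[a]) + trace (u * (b - a)) * trace (g.[b] / (b - a)) = 0.
Proof.
move=> a_neq_b size_g checks_a.
rewrite -[RHS](trace_check_relation a u size_g) (bigD1 b) 1?eq_sym //=.
rewrite [X in _ = _ + (_ + X)]big1 ?addr0 // => x /andP[x_neq_b x_neq_a].
by rewrite checks_a // mulr0.
Qed.

Lemma trace_checks_vanish a b (g : {poly F}) :
  a != b -> t%:R = 0 :> F -> (size g <= #|F| - q ^ t.-1)%N ->
  (forall x, x != a -> x != b -> trace (g.[x] / (x - a)) = 0) ->
  (forall x, x != a -> x != b -> trace (g.[x] / (x - b)) = 0) ->
  g.[a] = 0.
Proof.
move=> a_neq_b t_eq0 size_g checks_a checks_b.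
(* with [u = (a - b)^-1] the unknown term at [a] carries the factor [trace 1 = t = 0] *)
have trace_b : trace (g.[b] / (b - a)) = 0.
  have b_neq_a : b != a by rewrite eq_sym.
  have := trace_check_two_points (a - b)^-1 b_neq_a size_g
    (fun x x_neq_b x_neq_a => checks_b x x_neq_a x_neq_b).
  rewrite mulVf ?subr_eq0 // trace1 t_eq0 mul0r addr0 => trace_ab.
  by rewrite -opprB invrN mulrN traceN mulrC trace_ab oppr0.
apply: trace_nondegenerate => u.
by have := trace_check_two_points u a_neq_b size_g checks_a; rewrite trace_b mulr0 addr0.
Qed.

End Trace.

Section FixedSubfield.

Variables (B F : finFieldType) (iota : {rmorphism B -> F}).

Definition fmorph_preim (x : F) : B := odflt 0 [pick b | iota b == x].

(* Mapping ['X^#|B| - 'X = \prod_b ('X - b%:P)] along [iota] shows that the roots of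
   ['X^#|B| - 'X] in [F] are the image of [iota]. *)
Lemma fmorph_preimK x : x ^+ #|B| = x -> iota (fmorph_preim x) = x.
Proof.
move=> x_fixed; rewrite /fmorph_preim; case: pickP => [b /eqP // | no_preim].
have := congr1 (fun P => (map_poly iota P).[x]) (finField_genPoly B).
rewrite /= rmorphB /= map_polyXn map_polyX !hornerE x_fixed subrr rmorph_prod horner_prod.
move/esym/eqP; rewrite prodf_seq_eq0 => /hasP[b _ /=].
by rewrite map_polyXsubC hornerXsubC subr_eq0 eq_sym no_preim.
Qed.

End FixedSubfield.

Lemma decoder_of_determined (X Y Z : Type) (z0 : Z) (S : X -> Prop) (D : X -> Y)
    (phi : X -> Z) :
  (forall x x', S x -> S x' -> D x = D x' -> phi x = phi x') ->
  exists R : Y -> Z, forall x, S x -> R (D x) = phi x.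
Proof.
move=> determined.
pose R y := epsilon (inhabits z0) (fun z => exists x, [/\ S x, D x = y & phi x = z]).
exists R => x Sx.
have [x' [Sx' Dx' <-]] : exists x', [/\ S x', D x' = D x & phi x' = R (D x)].
  apply: (epsilon_spec (inhabits z0)
    (fun z => exists x', [/\ S x', D x' = D x & phi x' = z])).
  by exists (phi x), x.
exact: determined.
Qed.

Section TraceRepair.

Variables (B F : finFieldType) (iota : {rmorphism B -> F}) (t : nat) (a1 a2 : F).
Hypotheses (B_pchar : [pchar F].-nat #|B|) (cardF : #|F| = (#|B| ^ t)%N).
Hypotheses (t_gt0 : (0 < t)%N) (t_eq0 : t%:R = 0 :> F) (a12 : a1 != a2).

Definition trace_repair_download (x y : F) (i : 'I_2) : B :=
  fmorph_preim iota (trace #|B| t (y / (x - if i == ord0 then a1 else a2))).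

Lemma trace_repair_determines (f f' : {poly F}) :
  RS_poly (rs_dim F B) f -> RS_poly (rs_dim F B) f' ->
  downloaded a1 a2 trace_repair_download f = downloaded a1 a2 trace_repair_download f' ->
  f.[a1] = f'.[a1] /\ f.[a2] = f'.[a2].
Proof.
move=> RS_f RS_f' same_download.
have B_gt1 := finNzRing_gt1 B.
have size_g : (size (f - f')%R <= #|F| - #|B| ^ t.-1)%N.
  have rs_dimE : rs_dim F B = (#|F| - #|B| ^ t.-1)%N.
    by rewrite /rs_dim cardF; congr (_ - _)%N; rewrite -{1}(prednK t_gt0) expnS mulKn // ltnW.
  rewrite -rs_dimE; apply: leq_trans (size_polyD _ _) _.
  by rewrite size_polyN geq_max; apply/andP.
have checks (i : 'I_2) x : x != a1 -> x != a2 ->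
    trace #|B| t ((f - f').[x] / (x - if i == ord0 then a1 else a2)) = 0.
  move=> x_neq_a1 x_neq_a2.
  have := congr1 (fun d => iota (d x i)) same_download.
  rewrite /downloaded x_neq_a1 x_neq_a2 /= !fmorph_preimK ?trace_expq //.
  by rewrite hornerD hornerN mulrBl traceB // => ->; rewrite subrr.
have a21 : a2 != a1 by rewrite eq_sym.
split; apply/eqP; rewrite -subr_eq0 -hornerN -hornerD; apply/eqP.
  exact: trace_checks_vanish a12 t_eq0 size_g (checks ord0) (checks ord_max).
exact: trace_checks_vanish a21 t_eq0 size_g
  (fun x x_neq_a2 x_neq_a1 => checks ord_max x x_neq_a1 x_neq_a2)
  (fun x x_neq_a2 x_neq_a1 => checks ord0 x x_neq_a1 x_neq_a2).
Qed.

End TraceRepair.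

Theorem theorem2 (p m t : nat) (B F : finFieldType) (iota : {rmorphism B -> F}) :
  prime p -> (1 <= m)%N -> (1 <= t)%N ->
  #|B| = (p ^ m)%N -> #|F| = (p ^ (m * t))%N ->
  (p %| t)%N ->
  forall alpha_star alpha_bar : F, alpha_star != alpha_bar ->
  exists (h : F -> F -> 'I_2 -> B) (R1 R2 : (F -> 'I_2 -> B) -> F),
    forall f : {poly F}, RS_poly (rs_dim F B) f ->
      R1 (downloaded alpha_star alpha_bar h f) = f.[alpha_star] /\
      R2 (downloaded alpha_star alpha_bar h f) = f.[alpha_bar].
Proof.
move=> p_prime _ t_gt0 cardB cardF p_dvd_t a1 a2 a12.
have p_pchar : p \in [pchar F] := card_finPcharP cardF p_prime.
have B_pchar : [pchar F].-nat #|B| by rewrite cardB pnatX (pnatE _ p_prime) p_pchar.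
have cardFB : #|F| = (#|B| ^ t)%N by rewrite cardF cardB expnM.
have t_eq0 : t%:R = 0 :> F by rewrite -(divnK p_dvd_t) natrM (pcharf0 p_pchar) mulr0.
pose h := trace_repair_download iota t a1 a2.
have determined := trace_repair_determines (iota := iota) B_pchar cardFB t_gt0 t_eq0 a12.
pose RS (f : {poly F}) : Prop := RS_poly (rs_dim F B) f.
have [R1 R1_spec] := @decoder_of_determined _ _ _ 0 RS (downloaded a1 a2 h) (horner^~ a1)
  (fun f f' RS_f RS_f' same => (determined f f' RS_f RS_f' same).1).
have [R2 R2_spec] := @decoder_of_determined _ _ _ 0 RS (downloaded a1 a2 h) (horner^~ a2)
  (fun f f' RS_f RS_f' same => (determined f f' RS_f RS_f' same).2).
by exists h, R1, R2 => f RS_f; split; [exact: R1_spec | exact: R2_spec].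
Qed.
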